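(* Let $\mathcal{F}=(\mathcal{F}_1,\dots,\mathcal{F}_r)$ be a flag on $\mathbb{F}_{q^n}$ whose best friend is the subfield $\mathbb{F}_{q^m}$, and let $\beta\in\mathbb{F}_{q^n}^\ast\setminus\mathbb{F}_{q^m}^\ast$. (1) If exactly $j\geq 1$ of the subspaces $\mathcal{F}_1,\dots,\mathcal{F}_r$ have $\mathbb{F}_{q^m}$ as their best friend, then $d_f(\mathrm{Orb}_\beta(\mathcal{F}))\geq 2mj$. (2) If $d_f(\mathrm{Orb}_\beta(\mathcal{F}))=2m$, then $\mathbb{F}_{q^m}$ is the best friend of exactly one subspace of $\mathcal{F}$.
   Context: $q$ is a prime power and $\mathbb{F}_{q^n}$ is regarded as an $n$-dimensional $\mathbb{F}_q$-vector space; all subspaces are $\mathbb{F}_q$-subspaces. The subspace distance is $d_S(\mathcal{U},\mathcal{V})=\dim(\mathcal{U}+\mathcal{V})-\dim(\mathcal{U}\cap\mathcal{V})$. A flag $\mathcal{F}=(\mathcal{F}_1,\dots,\mathcal{F}_r)$ on $\mathbb{F}_{q^n}$ is a sequence of subspaces $\{0\}\subsetneq\mathcal{F}_1\subsetneq\cdots\subsetneq\mathcal{F}_r\subsetneq\mathbb{F}_{q^n}$; its type is $(\dim\mathcal{F}_1,\dots,\dim\mathcal{F}_r)$. The flag distance between flags of the same type is $d_f(\mathcal{F},\mathcal{F}')=\sum_{i=1}^r d_S(\mathcal{F}_i,\mathcal{F}'_i)$. A flag code is a nonempty set of flags of a fixed type; its minimum distance $d_f(\mathcal{C})$ is the minimum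 of $d_f$ over pairs of distinct elements (and $0$ if $|\mathcal{C}|=1$). For $\beta\in\mathbb{F}_{q^n}^\ast$ of multiplicative order $|\beta|$, $\mathcal{F}\beta=(\mathcal{F}_1\beta,\dots,\mathcal{F}_r\beta)$ and $\mathrm{Orb}_\beta(\mathcal{F})=\{\mathcal{F}\beta^j: 0\le j\le|\beta|-1\}$. A subfield $\mathbb{F}_{q^m}\subseteq\mathbb{F}_{q^n}$ is a friend of a subspace $\mathcal{U}$ if $\mathcal{U}$ is an $\mathbb{F}_{q^m}$-vector space (closed under multiplication by $\mathbb{F}_{q^m}$); the best friend of $\mathcal{U}$ is its largest friend. A subfield is a friend of a flag if it is a friend of all its subspaces; the best friend of a flag is its largest friend. *)

From HB Require Import structures.
From mathcomp Require Import all_boot all_order all_algebra all_field.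
From Stdlib Require Import ClassicalEpsilon.
Set Implicit Arguments. Unset Strict Implicit. Unset Printing Implicit Defensive.
Import GRing.Theory.
Local Open Scope ring_scope.

(* F plays the role of F_q (a finite field), L the role of F_{q^n}, a finite
   dimensional field extension of F; "subspace" = {vspace L} (F-subspaces),
   "subfield of F_{q^n}" = {subfield L} (subfields containing F_q, i.e. all
   subfields F_{q^m}); m = \dim E. *)
Section FlagDefs.
Variables (F : finFieldType) (L : fieldExtType F).

Definition subspace_dist (U V : {vspace L}) : nat :=
  (\dim (U + V) - \dim (U :&: V))%N.

Definition strict_sub (U V : {vspace L}) : bool := (U <= V)%VS && (U != V).
Definition is_flag (f : seq {vspace L}) : bool :=
  path strict_sub 0%VS (rcons f fullv).

Definition flag_dist (f g : seq {vspace L}) : nat :=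
  sumn [seq subspace_dist p.1 p.2 | p <- zip f g].

(* minimum distance of a flag code given as a list of flags
   (0 if there are no two distinct elements) *)
Definition min_dist (C : seq (seq {vspace L})) : nat :=
  let ds := [seq flag_dist x y | x <- C, y <- [seq y <- C | y != x]] in
  if ds is d :: ds' then foldr minn d ds' else 0%N.

Definition flag_mul (f : seq {vspace L}) (b : L) : seq {vspace L} :=
  [seq (U * <[b]>)%VS | U <- f].

(* multiplicative order of b (b <> 0): least k >= 1 with b^k = 1;
   such k exists with k <= #|F|^(dim L) - 1, so the search bound suffices *)
Definition mult_order (b : L) : nat :=
  (find (fun k => b ^+ k.+1 == 1) (iota 0 (#|F| ^ \dim (fullv : {vspace L}))%N)).+1.

Definition flag_orbit (f : seq {vspace L}) (b : L) : seq (seq {vspace L}) :=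
  [seq flag_mul f (b ^+ j) | j <- iota 0 (mult_order b)].

Definition friend (E : {subfield L}) (U : {vspace L}) : bool := (E * U <= U)%VS.
(* best friend: the largest friend (Prop), and its boolean reflection
   (via classical excluded middle) so that subspaces can be counted *)
Definition is_best_friend (E : {subfield L}) (U : {vspace L}) : Prop :=
  friend E U /\ forall E' : {subfield L}, friend E' U -> (E' <= E)%VS.
Definition best_friend (E : {subfield L}) (U : {vspace L}) : bool :=
  if excluded_middle_informative (is_best_friend E U) then true else false.

Definition flag_friend (E : {subfield L}) (f : seq {vspace L}) : bool :=
  all (friend E) f.
Definition flag_best_friend (E : {subfield L}) (f : seq {vspace L}) : Prop :=
  flag_friend E f /\ forall E' : {subfield L}, flag_friend E' f -> (E' <= E)%VS.

End FlagDefs.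

From HB Require Import structures.
From mathcomp Require Import all_boot all_order all_algebra all_field.
From mathcomp Require Import zify.
From Stdlib Require Import Classical ClassicalEpsilon.
Set Implicit Arguments. Unset Strict Implicit. Unset Printing Implicit Defensive.
Import GRing.Theory.
Local Open Scope ring_scope.

(* If U is a K-subspace then so is every U a, and two distinct K-subspaces
   of equal dimension are at subspace distance at least 2 dim K, because the
   dimensions of U, V and U :&: V are all multiples of dim K.  If U a = U b,
   then b / a stabilises U, so U is also a vector space over the field
   generated by its best friend and b / a; hence b / a lies in the best
   friend.  For U with best friend F_{q^m} this puts b / a in F_{q^m}, which
   fixes every subspace of the flag, so two distinct orbit elements differ
   in each of the j such components, each contributing at least 2m.  If
   j = 0, a component where they differ has a friend strictly larger than
   F_{q^m}, of dimension at least 2m, and contributes at least 4m; so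
   distance exactly 2m forces j = 1. *)

Section Friends.
Variables (F : finFieldType) (L : fieldExtType F).
Implicit Types (U V : {vspace L}) (K E : {subfield L}).

Lemma prodv_lineM U a b : (U * <[a]> * <[b]> = U * <[a * b]>)%VS.
Proof. by rewrite -prodvA prodv_line. Qed.

Lemma dim_prodv_line U a : a != 0 -> \dim (U * <[a]>) = \dim U.
Proof.
move=> a0; have dim_le V b : (\dim (V * <[b]>) <= \dim V)%N.
  apply: leq_trans (dim_prodv _ _) _.
  by rewrite dim_vline; case: (b != 0); rewrite ?muln1 ?muln0.
apply/eqP; rewrite eqn_leq dim_le /=.
by rewrite -{1}[U]prodv1 -(mulfV a0) -prodv_lineM dim_le.
Qed.

Lemma prodv_line_eq1 U a b :
  a != 0 -> (U * <[a]> = U * <[b]>)%VS -> (U * <[b / a]> = U)%VS.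
Proof. by move=> a0 eqab; rewrite -prodv_lineM -eqab prodv_lineM mulfV ?prodv1. Qed.

Lemma friend_prodv_line K U a : friend K U -> friend K (U * <[a]>).
Proof. by rewrite /friend prodvA => /prodvSl. Qed.

Lemma friend_cap K U V : friend K U -> friend K V -> friend K (U :&: V).
Proof.
move=> KU KV; rewrite /friend subv_cap.
by rewrite (subv_trans (prodvSr _ (capvSl U V))) ?(subv_trans (prodvSr _ (capvSr U V))).
Qed.

Lemma friend_prod_subfield E K U : friend E U -> friend K U -> friend (E * K)%AS U.
Proof. by rewrite /friend /= -prodvA => EU KU; exact: subv_trans (prodvSr _ KU) EU. Qed.

Lemma friend_prodv_line_id E U x :
  friend E U -> x \in E -> x != 0 -> (U * <[x]> = U)%VS.
Proof.
move=> EU xE x0; apply/eqP; rewrite eqEdim dim_prodv_line // leqnn andbT.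
by rewrite prodvC (subv_trans _ EU) // prodvSl // -memvE.
Qed.

Lemma friend_adjoin E U g : friend E U -> (U * <[g]> = U)%VS -> friend <<E; g>>%AS U.
Proof.
move=> EU Ug; rewrite /friend agenv_modl // prodvDl subv_add -/(friend E U) EU.
by rewrite prodvC Ug subvv.
Qed.

Lemma subspace_dist_friend K U V : friend K U -> friend K V ->
  \dim U = \dim V -> U != V -> (2 * \dim K <= subspace_dist U V)%N.
Proof.
move=> KU KV dimUV neqUV; rewrite /subspace_dist.
have /dvdnP [c dimUV_c] := field_module_dimS (friend_cap KU KV).
have /dvdnP [d dimU_d] := field_module_dimS KU.
have ltUV : (\dim (U :&: V) < \dim U)%N.
  rewrite ltn_neqAle dimvS ?capvSl // andbT; apply: contra neqUV => /eqP eqUV.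
  have /eqP capU : (U :&: V == U)%VS by rewrite eqEdim capvSl eqUV leqnn.
  by rewrite eqEdim -dimUV leqnn andbT -capU capvSr.
have := dimv_sum_cap U V; rewrite -dimUV.
move: ltUV; rewrite dimUV_c dimU_d ltn_mul2r => /andP [_ ltcd].
have : (\dim K + c * \dim K <= d * \dim K)%N by rewrite -mulSn leq_mul2r ltcd orbT.
move: (\dim K) (c * \dim K)%N (d * \dim K)%N (\dim (U + V)) => k ck dk s; lia.
Qed.

Lemma dim_prod_subfield E K : ~~ (K <= E)%VS -> (2 * \dim E <= \dim (E * K)%AS)%N.
Proof.
move=> notKE; have sEEK : (E <= (E * K)%AS)%VS by rewrite /= field_subvMr.
have /dvdnP [x dimEK] := field_dimS sEEK.
have : (\dim E < \dim (E * K)%AS)%N.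
  rewrite ltn_neqAle dimvS // andbT; apply: contra notKE => /eqP dimE.
  have /eqP -> : (E == (E * K)%AS :> {vspace L}) by rewrite eqEdim sEEK dimE leqnn.
  by rewrite /= field_subvMl.
rewrite dimEK -{1}[\dim E]mul1n ltn_mul2r => /andP [_ lt1x].
by rewrite leq_mul2r lt1x orbT.
Qed.

Lemma best_friendE E U : best_friend E U <-> is_best_friend E U.
Proof. by rewrite /best_friend; case: excluded_middle_informative. Qed.

Lemma best_friend_stab E U g :
  is_best_friend E U -> (U * <[g]> = U)%VS -> g \in E.
Proof.
by move=> [EU maxE] Ug; apply: subvP (maxE _ (friend_adjoin EU Ug)) _ (memv_adjoin _ _).
Qed.

Lemma friend_not_best E U : friend E U -> ~~ best_friend E U ->
  exists2 K, friend K U & (2 * \dim E <= \dim K)%N.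
Proof.
move=> EU /negP notbest.
have [K KU notKE] : exists2 K, friend K U & ~~ (K <= E)%VS.
  apply: NNPP => noK; apply/notbest/best_friendE; split=> // K KU.
  by apply: NNPP => notKE; apply: noK; exists K => //; apply/negP.
by exists (E * K)%AS; [apply: friend_prod_subfield | apply: dim_prod_subfield].
Qed.

End Friends.

Lemma leq_foldr_minn B d ds :
  (forall z, z \in d :: ds -> B <= z)%N -> (B <= foldr minn d ds)%N.
Proof.
elim: ds => [|e ds IH] lbB /=; first by rewrite lbB ?mem_head.
rewrite leq_min lbB ?inE ?eqxx ?orbT //=; apply: IH => z.
by rewrite !inE => /orP [] zin; apply: lbB; rewrite !inE zin ?orbT.
Qed.

Lemma foldr_minn_mem d ds : foldr minn d ds \in d :: ds.
Proof.
elim: ds => [|e ds IH] /=; first exact: mem_head.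
rewrite !inE /minn; case: ltnP => _; rewrite ?eqxx ?orbT //.
by move: IH; rewrite inE => /orP [] ->; rewrite ?orbT.
Qed.

Section FlagCodes.
Variables (F : finFieldType) (L : fieldExtType F).
Implicit Types (C : seq (seq {vspace L})) (f x y : seq {vspace L}).

Definition distinct_pairs_dist C : seq nat :=
  [seq flag_dist x y | x <- C, y <- [seq y <- C | y != x]].

Lemma mem_distinct_pairs_dist C z : z \in distinct_pairs_dist C ->
  exists x y, [/\ x \in C, y \in C, y != x & z = flag_dist x y].
Proof.
by case/allpairsPdep => x [y [xC]]; rewrite mem_filter => /andP [yx yC] ->; exists x, y.
Qed.

Lemma min_dist_ge C B x0 y0 : x0 \in C -> y0 \in C -> y0 != x0 ->
  (forall x y, x \in C -> y \in C -> y != x -> B <= flag_dist x y)%N ->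
  (B <= min_dist C)%N.
Proof.
move=> x0C y0C yx0 lbB; rewrite /min_dist -/(distinct_pairs_dist C).
have : flag_dist x0 y0 \in distinct_pairs_dist C.
  by apply/allpairsPdep; exists x0, y0; rewrite mem_filter yx0 y0C.
have := @mem_distinct_pairs_dist C.
case: (distinct_pairs_dist C) => // d ds dsC _; apply: leq_foldr_minn => z zin.
by have [x [y [xC yC yx ->]]] := dsC z zin; apply: lbB.
Qed.

Lemma min_dist_attained C : min_dist C != 0%N ->
  exists x y, [/\ x \in C, y \in C, y != x & min_dist C = flag_dist x y].
Proof.
rewrite /min_dist -/(distinct_pairs_dist C).
have := @mem_distinct_pairs_dist C.
by case: (distinct_pairs_dist C) => // d ds dsC _; apply/dsC/foldr_minn_mem.
Qed.

Lemma flag_dist_mul f a b : flag_dist (flag_mul f a) (flag_mul f b) =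
  sumn [seq subspace_dist (U * <[a]>)%VS (U * <[b]>)%VS | U <- f].
Proof. by elim: f => //= U f IH; rewrite /flag_dist /= -IH. Qed.

Lemma mult_order_gt1 (b : L) : b != 1 -> (1 < mult_order b)%N.
Proof.
move=> b1; rewrite /mult_order ltnS.
have : (0 < #|F| ^ \dim (fullv : {vspace L}))%N.
  by rewrite expn_gt0; apply/orP; left; apply/card_gt0P; exists 0.
by case: (#|F| ^ _)%N => // N _ /=; rewrite expr1 (negbTE b1).
Qed.

Lemma flag_orbitP f b x :
  reflect (exists2 k, (k < mult_order b)%N & x = flag_mul f (b ^+ k)) (x \in flag_orbit f b).
Proof.
by apply: (iffP mapP) => -[k]; rewrite ?mem_iota => ltk ->; exists k; rewrite ?mem_iota.
Qed.

End FlagCodes.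

Lemma leq_count_sumn (T : eqType) (P : pred T) (g : T -> nat) c s :
  (forall U, U \in s -> P U -> c <= g U)%N -> (c * count P s <= sumn (map g s))%N.
Proof.
elim: s => [|U s IH] lbc /=; first by rewrite muln0.
rewrite mulnDr leq_add //; last by apply: IH => V Vs; apply: lbc; rewrite inE Vs orbT.
by case PU: (P U); rewrite ?muln0 // muln1 lbc ?mem_head.
Qed.

Lemma leq_sumn_mem (T : eqType) (g : T -> nat) s U :
  U \in s -> (g U <= sumn (map g s))%N.
Proof.
elim: s => //= V s IH; rewrite inE => /orP [/eqP -> | /IH]; first exact: leq_addr.
by move/leq_trans; apply; apply: leq_addl.
Qed.

Section Orbit.
Variables (F : finFieldType) (L : fieldExtType F).
Context {f : seq {vspace L}} {E : {subfield L}} {beta : L}.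
Hypotheses (fE : flag_best_friend E f) (beta0 : beta != 0).

Let friendE U : U \in f -> friend E U.
Proof. by case: fE => fEf _; apply: (allP fEf). Qed.

Let flag_orbit_neq0 x : x \in flag_orbit f beta -> exists2 a, a != 0 & x = flag_mul f a.
Proof. by case/flag_orbitP => k _ ->; exists (beta ^+ k); rewrite ?expf_neq0. Qed.

Lemma flag_mul_best_friend_neq U a b : U \in f -> best_friend E U ->
  a != 0 -> b != 0 -> flag_mul f a != flag_mul f b -> (U * <[a]> != U * <[b]>)%VS.
Proof.
move=> Uf /best_friendE bestU a0 b0; apply: contra => /eqP Uab.
have baE := best_friend_stab bestU (prodv_line_eq1 a0 Uab).
have ba0 : b / a != 0 by rewrite mulf_neq0 ?invr_eq0.
apply/eqP/eq_in_map => V Vf.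
by rewrite /= -[b](divfK a0) -prodv_lineM (friend_prodv_line_id (friendE Vf) baE ba0).
Qed.

Lemma orbit_dist_ge_count x y : x \in flag_orbit f beta -> y \in flag_orbit f beta ->
  y != x -> (2 * \dim E * count (best_friend E) f <= flag_dist x y)%N.
Proof.
move=> /flag_orbit_neq0 [a a0 ->] /flag_orbit_neq0 [b b0 ->] yx.
rewrite flag_dist_mul; apply: leq_count_sumn => U Uf bestU.
apply: subspace_dist_friend; rewrite ?friend_prodv_line ?friendE ?dim_prodv_line //.
by apply: flag_mul_best_friend_neq; rewrite // eq_sym.
Qed.

Lemma orbit_dist_no_best_friend x y : x \in flag_orbit f beta -> y \in flag_orbit f beta ->
  y != x -> count (best_friend E) f = 0%N -> (2 * (2 * \dim E) <= flag_dist x y)%N.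
Proof.
move=> /flag_orbit_neq0 [a a0 ->] /flag_orbit_neq0 [b b0 ->] yx /eqP.
rewrite eqn0Ngt -has_count => /hasPn notbest.
have [U Uf Uab] : exists2 U, U \in f & (U * <[a]> != U * <[b]>)%VS.
  apply/hasP; apply: contraNT yx => /hasPn Uab; rewrite eq_sym.
  by apply/eqP/eq_in_map => U /Uab /negPn /eqP.
have [K KU dimK] := friend_not_best (friendE Uf) (notbest U Uf).
rewrite flag_dist_mul; apply: leq_trans (leq_sumn_mem _ Uf).
apply: leq_trans (subspace_dist_friend (K := K) _ _ _ Uab).
- by rewrite leq_mul2l dimK orbT.
- exact: friend_prodv_line.
- exact: friend_prodv_line.
- by rewrite !dim_prodv_line.
Qed.

Lemma flag_orbit_distinct : has (best_friend E) f -> beta \notin E ->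
  [/\ flag_mul f 1 \in flag_orbit f beta, flag_mul f beta \in flag_orbit f beta
    & flag_mul f beta != flag_mul f 1].
Proof.
case/hasP => U Uf bestU betaE.
have beta1 : beta != 1 by apply: contraNneq betaE => ->; exact: mem1v.
have ord_gt1 := mult_order_gt1 beta1.
split; first by apply/flag_orbitP; exists 0%N; rewrite ?(ltn_trans _ ord_gt1).
  by apply/flag_orbitP; exists 1%N; rewrite ?expr1.
apply: contra betaE => /eqP /eq_in_map /(_ U Uf) /=; rewrite prodv1.
by apply: best_friend_stab; apply/best_friendE.
Qed.

End Orbit.

Theorem mainTheorem1 (F : finFieldType) (L : fieldExtType F)
    (f : seq {vspace L}) (E : {subfield L}) (beta : L) :
  is_flag f -> flag_best_friend E f ->
  beta != 0 -> beta \notin E ->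
  (forall j : nat, (0 < j)%N -> count (best_friend E) f = j ->
     (2 * \dim E * j <= min_dist (flag_orbit f beta))%N) /\
  (min_dist (flag_orbit f beta) = (2 * \dim E)%N -> count (best_friend E) f = 1%N).
Proof.
move=> _ fE beta0 betaE; have dimE_gt0 := adim_gt0 E.
split=> [j j_gt0 countj | min_dist2m].
  have hasE : has (best_friend E) f by rewrite has_count countj.
  have [x1 xbeta neq] := flag_orbit_distinct hasE betaE.
  apply: (min_dist_ge x1 xbeta neq) => x y xo yo yx.
  by rewrite -countj; apply: (orbit_dist_ge_count fE beta0).
have min_dist_neq0 : min_dist (flag_orbit f beta) != 0%N.
  by rewrite min_dist2m muln_eq0 (gtn_eqF dimE_gt0).
have [x [y [xo yo yx dist_xy]]] := min_dist_attained min_dist_neq0.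
rewrite min_dist2m in dist_xy.
case count_eq: (count (best_friend E) f) => [|[|k]] //.
  have := orbit_dist_no_best_friend fE beta0 xo yo yx count_eq.
  by rewrite -dist_xy; lia.
have := orbit_dist_ge_count fE beta0 xo yo yx.
by rewrite count_eq -dist_xy !mulnS; move: (2 * \dim E * k)%N => mk; lia.
Qed.
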